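(* Let $G=(V,E)$ be a directed graph in which every node has at least one out-neighbour, let $\alpha\in(0,1)$, $s\in V$, $r_{max}>0$, $\epsilon>0$, $\delta\in(0,1]$ and $p_f\in(0,1)$. Run the FORA estimator (described in the context) with $\omega=r_{sum}\cdot\frac{(2\epsilon/3+2)\ln(2/p_f)}{\epsilon^2\delta}$, where $r_{sum}$ is the total residue after Forward Push. Then for every node $t$ with $\pi(s,t)>\delta$, the returned estimate satisfies $|\pi(s,t)-\hat{\pi}(s,t)|\le\epsilon\cdot\pi(s,t)$ with probability at least $1-p_f$.
   Context: Random walk with restart from a node $u$: starting at $u$, at each step the walk terminates at the current node with probability $\alpha$, and otherwise moves to an out-neighbour of the current node chosen uniformly at random. The personalized PageRank $\pi(u,t)$ is the probability that such a walk from $u$ terminates at $t$. $N^{out}(v)$ denotes the set of out-neighbours of $v$. Forward Push (source $s$, threshold $r_{max}$): initialise residues $r(s,s)=1$, $r(s,v)=0$ for $v\neq s$, and reserves $\pi^\circ(s,v)=0$ for all $v$. While some node $v$ has $r(s,v)/|N^{out}(v)|>r_{max}$, pick such a $v$; for each $u\in N^{out}(v)$ increase $r(s,u)$ by $(1-\alpha)r(s,v)/|N^{out}(v)|$; increase $\pi^\circ(s,v)$ by $\alpha\, r(s,v)$; set $r(s,v)=0$. FORA estimator (parameter $\omega>0$): run Forward Push, let $r_{sum}=\sum_{v} r(s,v)$, and set $\hat{\pi}(s,v)=\pi^\circ(s,v)$ for all $v$. For each node $v_i$ with $r(s,v_i)>0$, let $\omega_i=\lceil r(s,v_i)\,\omega/r_{sum}\rceil$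 and $a_i=\frac{r(s,v_i)}{r_{sum}}\cdot\frac{\omega}{\omega_i}$; generate $\omega_i$ independent random walks with restart from $v_i$, and for each, if it terminates at $t$, increase $\hat{\pi}(s,t)$ by $a_i\, r_{sum}/\omega$. Return all $\hat{\pi}(s,v)$. *)

From HB Require Import structures.
From mathcomp Require Import all_boot all_order all_algebra.
From mathcomp Require Import all_classical all_reals all_analysis.
Unset Printing Implicit Defensive.
Import Order.TTheory GRing.Theory Num.Theory numFieldNormedType.Exports.
Local Open Scope ring_scope.

Section FORA.
Variables (R : realType) (V : finType).
(* the directed graph: N v = set of out-neighbours of v *)
Variable N : V -> {set V}.
Variable alpha : R.

Fixpoint walk_at (k : nat) (u t : V) : R :=
  match k with
  | 0%N => (u == t)%:R
  | k'.+1 => \sum_(w in N u) walk_at k' w t / #|N u|%:R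
  end.

(* Probability that the random walk with restart from u terminates at t
   after exactly k moves: it moves k times (prob (1-alpha)^k along the walk)
   and then terminates (prob alpha). *)
Definition rwr_term_at (u t : V) (k : nat) : R :=
  (1 - alpha) ^+ k * walk_at k u t * alpha.

Definition ppr (u t : V) : R := limn (series (rwr_term_at u t)).

(* A state is (residues r(s,.), reserves pi°(s,.)). *)
Definition fp_state := ((V -> R) * (V -> R))%type.

Definition fp_init (s : V) : fp_state :=
  (fun v => (v == s)%:R, fun _ => 0).

(* One push on node v (allowed when r(s,v)/|N^out(v)| > rmax).  The residue
   r(s,v) being pushed is its value before the push; self-loop contributions
   to v are kept (mass-preserving reading). *)
Definition fp_push (st : fp_state) (v : V) : fp_state :=
  let r := st.1 in let p := st.2 in
  (fun u => (if u == v then 0 else r u)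
            + (if u \in N v then (1 - alpha) * r v / #|N v|%:R else 0),
   fun u => p u + (if u == v then alpha * r v else 0)).

Inductive fp_reach (rmax : R) : fp_state -> fp_state -> Prop :=
  | fp_refl st : fp_reach rmax st st
  | fp_step st v st' : rmax < st.1 v / #|N v|%:R ->
      fp_reach rmax (fp_push st v) st' -> fp_reach rmax st st'.

Definition fp_terminal (rmax : R) (st : fp_state) : Prop :=
  forall v, ~ (rmax < st.1 v / #|N v|%:R).

Definition forward_push_output (s : V) (rmax : R) (st : fp_state) : Prop :=
  fp_reach rmax (fp_init s) st /\ fp_terminal rmax st.

Definition rsum (r : V -> R) : R := \sum_v r v.

Definition omega_i (r : V -> R) (omega : R) (v : V) : nat :=
  `|Num.ceil (r v * omega / rsum r)|%N.

Definition a_i (r : V -> R) (omega : R) (v : V) : R :=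
  r v / rsum r * (omega / (omega_i r omega v)%:R).

Definition walk_starts (r : V -> R) (omega : R) : seq V :=
  flatten [seq nseq (omega_i r omega v) v | v <- enum V & 0 < r v].

(* Estimate returned by FORA, given the termination nodes x j of the walks. *)
Definition fora_estimate (s : V) (st : fp_state) (omega : R)
  (x : {ffun 'I_(size (walk_starts st.1 omega)) -> V}) (t : V) : R :=
  st.2 t + \sum_(j < size (walk_starts st.1 omega))
     (if x j == t then a_i st.1 omega (nth s (walk_starts st.1 omega) j)
                        * rsum st.1 / omega else 0).

(* Probability of an event on the outcomes of the independent walks: the
   j-th walk starts at L_j and terminates at node y with probability
   ppr L_j y, independently of the others. *)
Definition walks_prob (s : V) (L : seq V) (E : pred {ffun 'I_(size L) -> V}) : R :=
  \sum_(x : {ffun 'I_(size L) -> V})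
     (\prod_(j < size L) ppr (nth s L j) (x j)) * (E x)%:R.

Definition fora_success_prob (s : V) (st : fp_state) (omega eps : R) (t : V) : R :=
  walks_prob s (walk_starts st.1 omega) [pred x | `|ppr s t - fora_estimate s st omega x t| <= eps * ppr s t].

End FORA.

Arguments walk_at {R V}. Arguments rwr_term_at {R V}. Arguments ppr {R V}.
Arguments fp_init {R V}. Arguments fp_push {R V}. Arguments fp_reach {R V}.
Arguments fp_terminal {R V}. Arguments forward_push_output {R V}.
Arguments rsum {R V}. Arguments omega_i {R V}. Arguments a_i {R V}.
Arguments walk_starts {R V}. Arguments fora_estimate {R V}.
Arguments walks_prob {R V}. Arguments fora_success_prob {R V}.

(* After Forward Push, pi(s,t) = pi°(s,t) + sum_v r(s,v) pi(v,t): this holds initially, and a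
   push on v moves alpha r(s,v) to the reserve and spreads (1 - alpha) r(s,v) over the
   out-neighbours of v, exactly as in the first-step equation for pi(v,t).  Hence the random
   part of the FORA estimate is a sum of independent contributions r(s,v_i)/omega_i in
   [0, a], a = r_sum/omega, one for each walk ending at t, whose mean is
   pi(s,t) - pi°(s,t) <= pi(s,t).  Bounding its moment generating function with
   e^x <= 1 + x + x^2/(2(1 - x/3)) gives the Bernstein tail
   P(|S - mean| > lam) <= 2 exp(-lam^2/(2a(M + lam/3))) for any M >= mean; with
   lam = eps pi(s,t) and M = pi(s,t) the choice of omega turns the exponent into
   -(pi(s,t)/delta) ln(2/p_f) <= -ln(2/p_f). *)

From HB Require Import structures.
From mathcomp Require Import all_boot all_order all_algebra.
From mathcomp Require Import all_classical all_reals all_analysis.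
From mathcomp Require Import ring lra.
Import Order.TTheory GRing.Theory Num.Theory numFieldNormedType.Exports.
Local Open Scope classical_set_scope.
Local Open Scope ring_scope.

Lemma cvg_sum {R : realType} {I : Type} {r : seq I} {P : pred I}
    {f : I -> nat -> R} {l : I -> R} :
  (forall i, P i -> f i n @[n --> \oo] --> l i) ->
  \sum_(i <- r | P i) f i n @[n --> \oo] --> \sum_(i <- r | P i) l i.
Proof. by move=> fl; apply: cvg_big => //; exact: add_continuous. Qed.

Section PersonalizedPageRank.
Context {R : realType} {V : finType} {N : V -> {set V}} {alpha : R}.
Hypothesis N_neq0 : forall v, N v != finset.set0.
Hypothesis alpha01 : 0 < alpha < 1.
Local Notation walk := (@walk_at R V N).
Local Notation rwr := (rwr_term_at N alpha).
Local Notation ppr := (ppr N alpha).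

Let norm_1Balpha_lt1 : `|1 - alpha| < 1.
Proof.
by have /andP[a0 a1] := alpha01; rewrite ger0_norm ?subr_ge0 ?ltW // ltrBlDr ltrDl.
Qed.

Let geometric_alpha_limE : alpha / (1 - (1 - alpha)) = 1.
Proof. by have /andP[a0 _] := alpha01; rewrite opprB addrC subrK divff ?lt0r_neq0. Qed.

Lemma card_out_neq0 u : (#|N u|%:R : R) != 0.
Proof. by rewrite pnatr_eq0 cards_eq0 N_neq0. Qed.

Lemma card_out_gt0 u : (0 : R) < #|N u|%:R.
Proof. by rewrite lt0r card_out_neq0 ler0n. Qed.

Lemma walk_at_ge0 k u t : 0 <= walk k u t.
Proof.
elim: k u => [|k IH] u /=; first by rewrite ler0n.
by apply: sumr_ge0 => w _; rewrite divr_ge0 ?IH ?ler0n.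
Qed.

Lemma walk_at_sum1 k u : \sum_t walk k u t = 1.
Proof.
elim: k u => [|k IH] u /=.
  rewrite (bigD1 u) //= eqxx big1 ?addr0 // => t.
  by rewrite eq_sym => /negbTE ->.
rewrite exchange_big /= (eq_bigr (fun=> #|N u|%:R^-1)) => [|w _].
  by rewrite sumr_const -[LHS]mulr_natr mulVf ?card_out_neq0.
by rewrite -mulr_suml IH mul1r.
Qed.

Lemma rwr_term_at_ge0 u t k : 0 <= rwr u t k.
Proof.
have /andP[a0 a1] := alpha01.
by rewrite /rwr_term_at !mulr_ge0 ?walk_at_ge0 ?exprn_ge0 ?subr_ge0 ?ltW.
Qed.

Lemma sum_rwr_term_at u k : \sum_t rwr u t k = geometric alpha (1 - alpha) k.
Proof.
rewrite /rwr_term_at /geometric; under eq_bigr do rewrite mulrAC.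
by rewrite -mulr_sumr walk_at_sum1 mulr1 mulrC.
Qed.

Lemma sum_series_rwr u n :
  \sum_t series (rwr u t) n = series (geometric alpha (1 - alpha)) n.
Proof.
rewrite /series /= exchange_big /=.
by apply: eq_bigr => k _; rewrite sum_rwr_term_at.
Qed.

Lemma cvg_geometric_alpha :
  series (geometric alpha (1 - alpha)) n @[n --> \oo] --> (1 : R).
Proof.
by have := @cvg_geometric_series R alpha _ norm_1Balpha_lt1; rewrite geometric_alpha_limE.
Qed.

Lemma series_rwr_le1 u t n : series (rwr u t) n <= 1.
Proof.
have /andP[a0 a1] := alpha01.
rewrite -geometric_alpha_limE.
apply: le_trans (geometric_le_lim n (ltW a0) _ norm_1Balpha_lt1); rewrite ?subr_gt0 //.
rewrite -(sum_series_rwr u n) (bigD1 t) //= lerDl.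
by apply: sumr_ge0 => t' _; apply: sumr_ge0 => k _; exact: rwr_term_at_ge0.
Qed.

Lemma ppr_cvg u t : series (rwr u t) n @[n --> \oo] --> ppr u t.
Proof.
apply: cvgP (ppr u t) _; apply: nondecreasing_is_cvgn.
  by apply/nondecreasing_seqP => n; rewrite seriesSr lerDl rwr_term_at_ge0.
by exists 1 => _ [n _ <-]; exact: series_rwr_le1.
Qed.

Lemma ppr_ge0 u t : 0 <= ppr u t.
Proof.
apply: limr_ge; first exact: cvgP (ppr_cvg u t).
by near=> n; apply: sumr_ge0 => k _; exact: rwr_term_at_ge0.
Unshelve. all: by end_near.
Qed.

Lemma ppr_sum1 u : \sum_t ppr u t = 1.
Proof.
have lim_sum1 : \sum_t series (rwr u t) n @[n --> \oo] --> (1 : R).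
  by under eq_cvg do rewrite sum_series_rwr; exact: cvg_geometric_alpha.
exact: cvg_unique (cvg_sum (fun t _ => ppr_cvg u t)) lim_sum1.
Qed.

Lemma series_rwr_first_step u t n :
  series (rwr u t) n.+1 = alpha * (u == t)%:R
    + (1 - alpha) / #|N u|%:R * \sum_(w in N u) series (rwr w t) n.
Proof.
rewrite /series /= big_nat_recl //; congr (_ + _).
  by rewrite /rwr_term_at /= expr0 mul1r mulrC.
rewrite exchange_big /= mulr_sumr; apply: eq_bigr => k _.
rewrite /rwr_term_at /= mulr_sumr mulr_suml mulr_sumr.
by apply: eq_bigr => w _; rewrite exprS; ring.
Qed.

Lemma ppr_first_step u t :
  ppr u t = alpha * (u == t)%:R + (1 - alpha) / #|N u|%:R * \sum_(w in N u) ppr w t.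
Proof.
have lim_step : series (rwr u t) n.+1 @[n --> \oo] -->
    alpha * (u == t)%:R + (1 - alpha) / #|N u|%:R * \sum_(w in N u) ppr w t.
  under eq_cvg do rewrite series_rwr_first_step.
  apply: cvgD; first exact: cvg_cst.
  by apply: cvgM; [exact: cvg_cst | exact: cvg_sum (fun w _ => ppr_cvg w t)].
have lim_shift : series (rwr u t) n.+1 @[n --> \oo] --> ppr u t.
  by have := ppr_cvg u t; rewrite -cvg_shiftS.
exact: cvg_unique lim_shift lim_step.
Qed.

End PersonalizedPageRank.

Section ForwardPush.
Context {R : realType} {V : finType} {N : V -> {set V}} {alpha : R}.
Hypothesis N_neq0 : forall v, N v != finset.set0.
Hypothesis alpha01 : 0 < alpha < 1.
Local Notation ppr := (ppr N alpha).
Local Notation push := (fp_push N alpha).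

Lemma push_weighted_sum (st : fp_state R V) v (h : V -> R) :
  \sum_u (push st v).1 u * h u = \sum_u st.1 u * h u - st.1 v * h v
    + (1 - alpha) * st.1 v / #|N v|%:R * \sum_(w in N v) h w.
Proof.
rewrite /= (eq_bigr _ (fun u _ => mulrDl _ _ (h u))) big_split /=; congr (_ + _).
  rewrite (bigD1 v) //= eqxx mul0r add0r [in RHS](bigD1 v) //= addrAC subrr add0r.
  by apply: eq_bigr => u /negbTE ->.
rewrite [in RHS]big_mkcond mulr_sumr; apply: eq_bigr => u _.
by case: (u \in N v); rewrite ?mul0r ?mulr0.
Qed.

Definition fp_invariant (s : V) (st : fp_state R V) : Prop :=
  [/\ forall v, 0 <= st.1 v, forall v, 0 <= st.2 v, 0 < rsum st.1 &
      forall t, ppr s t = st.2 t + \sum_v st.1 v * ppr v t].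

Lemma fp_invariant_init s : fp_invariant s (fp_init s).
Proof.
split=> [v|v||t] /=; rewrite ?ler0n //.
  by rewrite /rsum (bigD1 s) //= eqxx big1 ?addr0 ?ltr01 // => u /negbTE ->.
rewrite add0r (bigD1 s) //= eqxx mul1r big1 ?addr0 // => u /negbTE ->.
by rewrite mul0r.
Qed.

Lemma fp_invariant_push s (rmax : R) st v : 0 <= rmax ->
  rmax < st.1 v / #|N v|%:R -> fp_invariant s st -> fp_invariant s (push st v).
Proof.
move=> rmax0 above [r0 p0 rsum0 ppr_st]; have /andP[a0 a1] := alpha01.
have Nv0 : (0 : R) < #|N v|%:R := card_out_gt0 N_neq0 v.
have rv0 : 0 < st.1 v.
  rewrite ltr_pdivlMr // in above.
  exact: le_lt_trans (mulr_ge0 rmax0 (ltW Nv0)) above.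
split=> [u|u||t] /=.
- rewrite addr_ge0 //; first by case: ifP.
  by case: ifP => // _; rewrite divr_ge0 ?mulr_ge0 ?subr_ge0 ?ltW.
- by rewrite addr_ge0 //; case: ifP => // _; rewrite mulr_ge0 ?ltW.
- have rv_le : st.1 v <= \sum_u st.1 u by rewrite (bigD1 v) //= lerDl sumr_ge0.
  have kept : 0 < (1 - alpha) * st.1 v by rewrite mulr_gt0 ?subr_gt0.
  rewrite /rsum -(eq_bigr _ (fun u _ => mulr1 ((push st v).1 u))) push_weighted_sum.
  under eq_bigr do rewrite mulr1.
  by rewrite sumr_const mulr1 divfK ?card_out_neq0 //; lra.
- rewrite ppr_st push_weighted_sum (ppr_first_step N_neq0 alpha01 v t) eq_sym.
  by case: (v == t); rewrite /= ?mulr1 ?mulr0; ring.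
Qed.

Lemma fp_invariant_reach s rmax st st' : 0 <= rmax ->
  fp_reach N alpha rmax st st' -> fp_invariant s st -> fp_invariant s st'.
Proof.
move=> rmax0; elim=> // st0 v st1 above _ IH inv.
exact/IH/(fp_invariant_push _ _ _ _ rmax0 above).
Qed.

Lemma fp_invariant_output s rmax st : 0 <= rmax ->
  forward_push_output N alpha s rmax st -> fp_invariant s st.
Proof.
by move=> rmax0 [reach _]; exact: fp_invariant_reach rmax0 reach (fp_invariant_init s).
Qed.

End ForwardPush.

Lemma fact_ge_pow3 k : (2 * 3 ^ k <= k.+2`!)%N.
Proof.
elim: k => // k IH; rewrite factS expnS mulnCA.
by apply: leq_mul => //; rewrite ltnS.
Qed.

Section ExponentialBounds.
Context {R : realType}.
Implicit Types x y th : R.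

Definition bernstein_g x := x ^+ 2 / 2 / (1 - x / 3).

Lemma bernstein_g_ge0 x : 0 <= x < 3 -> 0 <= bernstein_g x.
Proof.
case/andP=> x0 x3; rewrite /bernstein_g !divr_ge0 ?sqr_ge0 //.
by rewrite subr_ge0 ler_pdivrMr // mul1r ltW.
Qed.

Lemma sqr_half_le_bernstein_g x : 0 <= x < 3 -> x ^+ 2 / 2 <= bernstein_g x.
Proof.
case/andP=> x0 x3; have d0 : 0 < 1 - x / 3 by rewrite subr_gt0 ltr_pdivrMr // mul1r.
rewrite /bernstein_g ler_pdivlMr // ler_piMr ?divr_ge0 ?sqr_ge0 //.
by rewrite lerBlDr lerDl divr_ge0.
Qed.

Lemma bernstein_g_scale th y : 0 <= y <= 1 -> 0 <= th < 3 ->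
  bernstein_g (th * y) <= y * bernstein_g th.
Proof.
case/andP=> y0 y1 /andP[t0 t3].
have d0 : 0 < 1 - th / 3 by rewrite subr_gt0 ltr_pdivrMr // mul1r.
have d_le : 1 - th / 3 <= 1 - th * y / 3.
  by rewrite lerD2l lerN2 ler_pM2r // ler_piMr.
have dy0 : 0 < 1 - th * y / 3 := lt_le_trans d0 d_le.
rewrite /bernstein_g mulrA ler_pdivrMr // [in X in _ <= X]mulrAC ler_pdivlMr //.
have num_le : (th * y) ^+ 2 / 2 <= y * (th ^+ 2 / 2).
  have : th ^+ 2 * y ^+ 2 <= th ^+ 2 * y by rewrite ler_wpM2l ?sqr_ge0 // expr2 ler_piMr.
  by rewrite exprMn; nra.
apply: le_trans (ler_wpM2l _ d_le) (ler_wpM2r (ltW dy0) num_le).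
by rewrite divr_ge0 ?sqr_ge0.
Qed.

Lemma exp_coeffSS_le x k : 0 <= x -> exp_coeff x k.+2 <= x ^+ 2 / 2 * (x / 3) ^+ k.
Proof.
move=> x0.
have -> : x ^+ 2 / 2 * (x / 3) ^+ k = x ^+ k.+2 / (2 * 3 ^ k)%:R.
  rewrite expr_div_n natrM natrX !exprS; field.
  by rewrite expf_neq0 ?pnatr_eq0.
rewrite exp_coeffE /= mulrC ler_wpM2l ?exprn_ge0 // lef_pV2 ?posrE ?ltr0n ?fact_gt0 //.
  by rewrite ler_nat fact_ge_pow3.
by rewrite muln_gt0 expn_gt0.
Qed.

Lemma expR_le_bernstein x : 0 <= x < 3 -> expR x <= 1 + x + bernstein_g x.
Proof.
case/andP=> x0 x3; have [->|x_neq0] := eqVneq x 0.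
  by rewrite expR0 addr0 lerDl bernstein_g_ge0 // lexx (le_lt_trans x0 x3).
have x_gt0 : 0 < x by rewrite lt0r x_neq0.
have q_gt0 : 0 < x / 3 by rewrite divr_gt0.
have q_lt1 : `|x / 3| < 1 by rewrite gtr0_norm // ltr_pdivrMr // mul1r.
(* As (k+2)! >= 2 3^k, the tail of the series is dominated by a geometric one of ratio x/3. *)
have partial_le n : series (exp_coeff x) n.+2 <= 1 + x + bernstein_g x.
  rewrite /series /= !big_nat_recl // addrA; apply: lerD.
    by rewrite !exp_coeffE /= !invr1 expr0 expr1 mulr1 mul1r.
  rewrite (le_trans (ler_sum _ (fun k _ => exp_coeffSS_le x k x0))) //.
  rewrite -mulr_sumr /bernstein_g ler_wpM2l ?divr_ge0 ?sqr_ge0 //.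
  rewrite -[(1 - x / 3)^-1]div1r; apply: le_trans (geometric_le_lim n ler01 q_gt0 q_lt1).
  by rewrite /series /geometric /=; under [X in _ <= X]eq_bigr do rewrite mul1r.
apply: limr_le; first exact: is_cvg_series_exp_coeff.
near=> n; apply: le_trans (partial_le n).
by rewrite !seriesSr -addrA lerDl addr_ge0 ?exp_coeff_ge0 ?ltW.
Unshelve. all: by end_near.
Qed.

Lemma expRN_le x : 0 <= x -> expR (- x) <= 1 - x + x ^+ 2 / 2.
Proof.
move=> x0.
have exp_ge : series (exp_coeff x) 4 <= expR x.
  apply: nondecreasing_cvgn_le; last exact: is_cvg_series_exp_coeff.
  by apply/nondecreasing_seqP => n; rewrite seriesSr lerDl exp_coeff_ge0.
have partial4 : series (exp_coeff x) 4 = 1 + x + x ^+ 2 / 2 + x ^+ 3 / 6.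
  by rewrite /series /exp_coeff /= !big_nat_recr //= big_geq // add0r expr0 expr1 !divr1.
rewrite partial4 in exp_ge; have pos : 0 < 1 - x + x ^+ 2 / 2 by nra.
rewrite expRN -(ler_pM2r (expR_gt0 x)) mulVf ?gt_eqF ?expR_gt0 //.
by apply: (le_trans _ (ler_wpM2l (ltW pos) exp_ge)); nra.
Qed.

Lemma expR_sub1_le th y : 0 <= y <= 1 -> 0 <= th < 3 ->
  expR (th * y) - 1 <= y * (th + bernstein_g th).
Proof.
move=> y01 th03; have /andP[y0 y1] := y01; have /andP[t0 t3] := th03.
have thy03 : 0 <= th * y < 3 by rewrite mulr_ge0 //= (le_lt_trans _ t3) // ler_piMr.
rewrite lerBlDl mulrDr [y * th]mulrC addrA.
apply: le_trans (expR_le_bernstein _ thy03) _.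
by rewrite lerD2l bernstein_g_scale.
Qed.

Lemma expRN_sub1_le th y : 0 <= y <= 1 -> 0 <= th < 3 ->
  expR (- (th * y)) - 1 <= y * (bernstein_g th - th).
Proof.
move=> y01 th03; have /andP[y0 y1] := y01; have /andP[t0 t3] := th03.
have thy03 : 0 <= th * y < 3 by rewrite mulr_ge0 //= (le_lt_trans _ t3) // ler_piMr.
have := le_trans (sqr_half_le_bernstein_g _ thy03) (bernstein_g_scale _ _ y01 th03).
have := expRN_le _ (mulr_ge0 t0 y0).
by rewrite mulrBr [y * th]mulrC; lra.
Qed.

End ExponentialBounds.

Section IndependentTrials.
Context {R : realType} {V : finType} {n : nat}.
Variable p : 'I_n -> V -> R.
Hypothesis p_ge0 : forall j y, 0 <= p j y.
Hypothesis p_sum1 : forall j, \sum_y p j y = 1.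
Implicit Types (f g : {ffun 'I_n -> V} -> R) (A : pred {ffun 'I_n -> V}).

Definition expect f := \sum_(x : {ffun 'I_n -> V}) (\prod_j p j (x j)) * f x.

Lemma eq_expect f g : f =1 g -> expect f = expect g.
Proof. by move=> fg; apply: eq_bigr => x _; rewrite fg. Qed.

Lemma expect_prod (h : 'I_n -> V -> R) :
  expect (fun x => \prod_j h j (x j)) = \prod_j \sum_y p j y * h j y.
Proof. by rewrite bigA_distr_bigA; apply: eq_bigr => x _; rewrite -big_split. Qed.

Lemma expect1 : expect (fun=> 1) = 1.
Proof.
rewrite /expect; under eq_bigr do rewrite mulr1.
by rewrite -bigA_distr_bigA big1.
Qed.

Lemma expectD f g : expect (fun x => f x + g x) = expect f + expect g.
Proof. by rewrite -big_split; apply: eq_bigr => x _; rewrite mulrDr. Qed.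

Lemma expectZ k f : expect (fun x => k * f x) = k * expect f.
Proof. by rewrite mulr_sumr; apply: eq_bigr => x _; rewrite mulrCA. Qed.

Lemma ler_expect f g : (forall x, f x <= g x) -> expect f <= expect g.
Proof.
by move=> fg; apply: ler_sum => x _; rewrite ler_wpM2l ?prodr_ge0.
Qed.

Lemma expect_indicatorN A :
  expect (fun x => (~~ A x)%:R) = 1 - expect (fun x => (A x)%:R).
Proof.
rewrite -[X in X - _]expect1 /expect -sumrB; apply: eq_bigr => x _.
by rewrite -mulrBr; case: (A x); rewrite ?subrr ?subr0.
Qed.

Lemma trial_prob_le1 j y : p j y <= 1.
Proof. by rewrite -(p_sum1 j) (bigD1 y) //= lerDl sumr_ge0. Qed.

End IndependentTrials.

Lemma indicator_lt_norm_le {R : realType} (k lam d : R) : 0 < k ->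
  (lam < `|d|)%R%:R <= expR (k * (d - lam)) + expR (k * (- d - lam)).
Proof.
move=> k0; case: ltP => [|_]; last by rewrite addr_ge0 ?expR_ge0.
have exp_ge1 z : lam < z -> 1 <= expR (k * (z - lam)).
  by move=> lt; rewrite -expR0 ler_expR mulr_ge0 ?ltW // subr_gt0.
rewrite ltr_normr => /orP[/exp_ge1 ge1 | /exp_ge1 ge1].
- by apply: le_trans ge1 _; rewrite lerDl expR_ge0.
- by apply: le_trans ge1 _; rewrite lerDr expR_ge0.
Qed.

Definition hits {R : realType} {V : finType} {n : nat} (c : 'I_n -> R) (t : V)
  (x : {ffun 'I_n -> V}) : R := \sum_j (if x j == t then c j else 0).

Definition hits_mean {R : realType} {V : finType} {n : nat} (p : 'I_n -> V -> R)
  (c : 'I_n -> R) (t : V) : R := \sum_j c j * p j t.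

Section WeightedHitsTail.
Context {R : realType} {V : finType} {n : nat}.
Variables (p : 'I_n -> V -> R) (c : 'I_n -> R) (a : R) (t : V).
Hypothesis p_ge0 : forall j y, 0 <= p j y.
Hypothesis p_sum1 : forall j, \sum_y p j y = 1.
Hypothesis a_gt0 : 0 < a.
Hypothesis c_bound : forall j, 0 <= c j <= a.
Local Notation E := (expect p).
Local Notation S := (hits c t).
Local Notation mu := (hits_mean p c t).

Lemma expect_expR_hits k :
  E (fun x => expR (k * S x)) = \prod_j (1 + p j t * (expR (k * c j) - 1)).
Proof.
transitivity (E (fun x => \prod_j expR (k * (if x j == t then c j else 0)))).
  by apply: eq_bigr => x _; rewrite /hits mulr_sumr expR_sum.
rewrite (expect_prod _ (fun j y => expR (k * (if y == t then c j else 0)))).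
apply: eq_bigr => j _.
rewrite (bigD1 t) //= eqxx (eq_bigr (fun y => p j y)) => [|y /negbTE ->]; last first.
  by rewrite mulr0 expR0 mulr1.
have -> : \sum_(y | y != t) p j y = 1 - p j t.
  by rewrite -(p_sum1 j) [in RHS](bigD1 t) //= [RHS]addrC addKr.
ring.
Qed.

Lemma expect_expR_hits_le k b : (forall j, expR (k * c j) - 1 <= c j / a * b) ->
  E (fun x => expR (k * S x)) <= expR (b * mu / a).
Proof.
move=> step; rewrite expect_expR_hits.
have -> : b * mu / a = \sum_j p j t * (c j / a * b).
  by rewrite /hits_mean mulr_sumr mulr_suml; apply: eq_bigr => j _; ring.
rewrite expR_sum; apply: ler_prod => j _; apply/andP; split.
  have := trial_prob_le1 _ p_ge0 p_sum1 j t; have := p_ge0 j t.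
  by have := expR_ge0 (k * c j); nra.
by apply: le_trans (expR_ge1Dx _); rewrite lerD2l ler_wpM2l.
Qed.

Lemma hits_tail th lam : 0 < th < 3 ->
  E (fun x => (lam < `|mu - S x|)%R%:R)
    <= 2 * expR ((bernstein_g th * mu - th * lam) / a).
Proof.
case/andP=> th0 th3; have th03 : 0 <= th < 3 by rewrite ltW.
set k := th / a; have k0 : 0 < k by rewrite divr_gt0.
have c01 j : 0 <= c j / a <= 1.
  have /andP[c0 ca] := c_bound j.
  by rewrite divr_ge0 ?(ltW a_gt0) // ler_pdivrMr // mul1r.
have kc j : k * c j = th * (c j / a) by rewrite /k mulrAC -mulrA.
have upper : E (fun x => expR (k * S x)) <= expR ((th + bernstein_g th) * mu / a).
  by apply: expect_expR_hits_le => j; rewrite kc expR_sub1_le.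
have lower : E (fun x => expR (- k * S x)) <= expR ((bernstein_g th - th) * mu / a).
  by apply: expect_expR_hits_le => j; rewrite mulNr kc expRN_sub1_le.
have ind_le x : (lam < `|mu - S x|)%R%:R <=
    expR (k * (mu - lam)) * expR (- k * S x) + expR (- (k * (mu + lam))) * expR (k * S x).
  have e1 : k * (mu - lam) + - k * S x = k * (mu - S x - lam) by ring.
  have e2 : - (k * (mu + lam)) + k * S x = k * (- (mu - S x) - lam) by ring.
  by rewrite -!expRD e1 e2; exact: indicator_lt_norm_le.
apply: le_trans (ler_expect _ p_ge0 _ _ ind_le) _.
rewrite expectD !expectZ mulr_natl mulr2n.
have e_low : expR (k * (mu - lam)) * expR ((bernstein_g th - th) * mu / a)
    = expR ((bernstein_g th * mu - th * lam) / a).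
  by rewrite -expRD /k; congr expR; field; exact: lt0r_neq0.
have e_up : expR (- (k * (mu + lam))) * expR ((th + bernstein_g th) * mu / a)
    = expR ((bernstein_g th * mu - th * lam) / a).
  by rewrite -expRD /k; congr expR; field; exact: lt0r_neq0.
rewrite -{1}e_low -e_up.
by apply: lerD; apply: ler_wpM2l; rewrite ?expR_ge0.
Qed.

Lemma hits_bernstein M lam : mu <= M -> 0 < M -> 0 < lam ->
  E (fun x => (lam < `|mu - S x|)%R%:R)
    <= 2 * expR (- (lam ^+ 2 / (2 * a * (M + lam / 3)))).
Proof.
move=> mu_le M0 lam0; have D0 : 0 < M + lam / 3 by rewrite addr_gt0 ?divr_gt0.
(* The value of th minimising the bound of hits_tail. *)
set th := lam / (M + lam / 3).
have th03 : 0 < th < 3.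
  rewrite divr_gt0 //= ltr_pdivrMr //; lra.
have -> : - (lam ^+ 2 / (2 * a * (M + lam / 3))) = (bernstein_g th * M - th * lam) / a.
  rewrite /bernstein_g /th; field.
  by rewrite addrK !gt_eqF //; lra.
apply: le_trans (hits_tail _ lam th03) _.
rewrite ler_pM2l // ler_expR ler_pM2r ?invr_gt0 // lerD2r.
by have /andP[th0 th3] := th03; rewrite ler_wpM2l // bernstein_g_ge0 // ltW.
Qed.

End WeightedHitsTail.

Section ForaWalks.
Context {R : realType} {V : finType}.
Variables (r : V -> R) (omega : R).
Hypothesis omega_gt0 : 0 < omega.
Hypothesis rsum_gt0 : 0 < rsum r.
Local Notation L := (walk_starts r omega).

Definition walk_weight v := a_i r omega v * rsum r / omega.

Section PositiveResidue.
Variable v : V.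
Hypothesis rv_gt0 : 0 < r v.

Let expected_walks_gt0 : 0 < r v * omega / rsum r.
Proof. by rewrite divr_gt0 ?mulr_gt0. Qed.

Let omega_iE : (omega_i r omega v)%:R = (Num.ceil (r v * omega / rsum r))%:~R :> R.
Proof. by rewrite /omega_i natr_absz ger0_norm // ltW // Num.Theory.ceil_gt0. Qed.

Lemma omega_i_ge : r v * omega / rsum r <= (omega_i r omega v)%:R.
Proof. by rewrite omega_iE Num.Theory.ceil_ge. Qed.

Lemma omega_i_gt0 : 0 < (omega_i r omega v)%:R :> R.
Proof. exact: lt_le_trans expected_walks_gt0 omega_i_ge. Qed.

Lemma walk_weightE : walk_weight v = r v / (omega_i r omega v)%:R.
Proof.
rewrite /walk_weight /a_i; field.
by rewrite !lt0r_neq0 ?omega_i_gt0.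
Qed.

Lemma walk_weight_bound : 0 <= walk_weight v <= rsum r / omega.
Proof.
rewrite walk_weightE divr_ge0 ?(ltW rv_gt0) ?(ltW (omega_i_gt0)) //=.
rewrite ler_pdivrMr ?omega_i_gt0 // mulrAC ler_pdivlMr // (mulrC (rsum r)).
by rewrite -ler_pdivrMr // omega_i_ge.
Qed.

End PositiveResidue.

Lemma walk_starts_gt0 x : x \in L -> 0 < r x.
Proof.
case/flattenP=> _ /mapP[v + ->] /nseqP[-> _].
by rewrite mem_filter => /andP[].
Qed.

Lemma sum_walk_starts s (G : V -> R) :
  \sum_(j < size L) G (nth s L j) = \sum_(v | 0 < r v) G v *+ omega_i r omega v.
Proof.
rewrite -(big_mkord xpredT (G \o nth s L)) -(big_nth s xpredT G).
rewrite /walk_starts big_flatten big_map big_filter big_enum_cond /=.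
by apply: eq_bigr => v _; rewrite big_nseq iter_addr_0.
Qed.

Lemma sum_walk_weights s (f : V -> R) : (forall v, 0 <= r v) ->
  \sum_(j < size L) walk_weight (nth s L j) * f (nth s L j) = \sum_v r v * f v.
Proof.
move=> r_ge0; rewrite (sum_walk_starts s (fun v => walk_weight v * f v)) big_mkcond.
apply: eq_bigr => v _; case: ifPn => [rv_gt0 | rv_le0].
  by rewrite walk_weightE // -[LHS]mulr_natr mulrAC divfK // lt0r_neq0 ?omega_i_gt0.
suff -> : r v = 0 by rewrite mul0r.
by apply/eqP; rewrite eq_le r_ge0 andbT leNgt.
Qed.

End ForaWalks.

Definition fora_omega {R : realType} (rs eps delta pf : R) : R :=
  rs * ((2 * eps / 3 + 2) * ln (2 / pf) / (eps ^+ 2 * delta)).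

Section FailureProbability.
Context {R : realType} {rs eps delta pf : R}.
Hypotheses (rs_gt0 : 0 < rs) (eps_gt0 : 0 < eps) (delta_gt0 : 0 < delta).
Hypothesis pf01 : 0 < pf < 1.
Local Notation omega := (fora_omega rs eps delta pf).

Let ln_2_div_pf_gt0 : 0 < ln (2 / pf).
Proof. by have /andP[pf0 pf1] := pf01; rewrite ln_gt0 // ltr_pdivlMr // mul1r; lra. Qed.

Lemma fora_omega_gt0 : 0 < omega.
Proof.
by rewrite mulr_gt0 // !divr_gt0 ?mulr_gt0 ?exprn_gt0 ?ln_2_div_pf_gt0 ?addr_gt0 ?divr_gt0
  ?mulr_gt0.
Qed.

Lemma fora_failure_le pi : delta < pi ->
  2 * expR (- ((eps * pi) ^+ 2 / (2 * (rs / omega) * (pi + eps * pi / 3)))) <= pf.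
Proof.
move=> delta_lt_pi; have pi_gt0 := lt_trans delta_gt0 delta_lt_pi.
have /andP[pf_gt0 _] := pf01.
have -> : (eps * pi) ^+ 2 / (2 * (rs / omega) * (pi + eps * pi / 3))
    = pi / delta * ln (2 / pf).
  by rewrite /fora_omega; field; rewrite !gt_eqF ?addr_gt0 ?mulr_gt0 ?ltr0n.
suff : expR (- (pi / delta * ln (2 / pf))) <= pf / 2 by lra.
rewrite -[pf / 2]invf_div -[2 / pf]lnK ?posrE ?divr_gt0 // -expRN ler_expR lerN2.
rewrite lnK ?posrE ?divr_gt0 // ler_peMl ?(ltW ln_2_div_pf_gt0) //.
by rewrite ler_pdivlMr // mul1r ltW.
Qed.

End FailureProbability.

Theorem lemma3p3 (R : realType) (V : finType) (N : V -> {set V})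
  (alpha : R) (s : V) (rmax eps delta pf : R) (st : fp_state R V) :
  (forall v, N v != finset.set0) ->
  0 < alpha < 1 -> 0 < rmax -> 0 < eps -> 0 < delta <= 1 -> 0 < pf < 1 ->
  forward_push_output N alpha s rmax st ->
  let omega := rsum st.1 * ((2 * eps / 3 + 2) * ln (2 / pf) / (eps ^+ 2 * delta)) in
  forall t : V, delta < ppr N alpha s t ->
    1 - pf <= fora_success_prob N alpha s st omega eps t.
Proof.
move=> N_neq0 alpha01 rmax_gt0 eps_gt0 /andP[delta_gt0 _] pf01 fp_out omega t.
move=> delta_lt_pi.
have [r_ge0 reserve_ge0 rsum_gt0 ppr_st] :=
  fp_invariant_output N_neq0 alpha01 _ _ _ (ltW rmax_gt0) fp_out.
have omega_gt0 : 0 < omega := fora_omega_gt0 rsum_gt0 eps_gt0 delta_gt0 pf01.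
set pi := ppr N alpha s t; have pi_gt0 : 0 < pi := lt_trans delta_gt0 delta_lt_pi.
set L := walk_starts st.1 omega.
pose p (j : 'I_(size L)) := ppr N alpha (nth s L j).
pose c (j : 'I_(size L)) := walk_weight st.1 omega (nth s L j).
have c_bound j : 0 <= c j <= rsum st.1 / omega.
  apply: walk_weight_bound _ _ omega_gt0 rsum_gt0 _ _.
  exact: walk_starts_gt0 _ _ _ (mem_nth s (ltn_ord j)).
have mean : hits_mean p c t = pi - st.2 t.
  rewrite /hits_mean (sum_walk_weights _ _ omega_gt0 rsum_gt0 s (ppr N alpha ^~ t)) //.
  by rewrite /pi ppr_st addrC addKr.
have success x : (`|pi - fora_estimate s st omega x t| <= eps * pi)%R%:R
    = (~~ (eps * pi < `|hits_mean p c t - hits c t x|))%R%:R :> R.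
  by rewrite -leNgt mean opprD addrA.
have p_ge0 j y : 0 <= p j y := ppr_ge0 N_neq0 alpha01 _ _.
have p_sum1 j : \sum_y p j y = 1 := ppr_sum1 N_neq0 alpha01 _.
rewrite /fora_success_prob /walks_prob -/(expect p _) (eq_expect _ _ _ success).
rewrite expect_indicatorN // lerD2l lerN2.
have mean_le : hits_mean p c t <= pi by rewrite mean lerBlDr lerDl.
apply: le_trans _ (fora_failure_le rsum_gt0 eps_gt0 delta_gt0 pf01 _ delta_lt_pi).
exact: hits_bernstein _ _ _ _ p_ge0 p_sum1 (divr_gt0 rsum_gt0 omega_gt0) c_bound
  _ _ mean_le pi_gt0 (mulr_gt0 eps_gt0 pi_gt0).
Qed.
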